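(* Let $\mathbf{G}_0=(\mathbf{L}_0,\mathbf{H}_0)$ be a non-trivial partial-monitoring game in which Learner has $N=2$ actions and Nature has $M$ actions ($M\ge1$ arbitrary). Then there is a $2\times M$ bandit game $\mathbf{G}'$ with $\mathbf{G}_0\le\mathbf{G}'$. Consequently the minimax regret of $\mathbf{G}_0$ is $\Theta(\sqrt{T})$, i.e. there are constants $0<c\le C$ (depending on $\mathbf{G}_0$ but not on $T$) with $c\sqrt{T}\le R_T^*(\mathbf{G}_0)\le C\sqrt{T}$ for all $T\ge1$.
   Context: A partial-monitoring game $\mathbf{G}=(\mathbf{L},\mathbf{H})$ is given by two real $N\times M$ matrices: the loss matrix $\mathbf{L}=(\ell_{ij})$ (entries in $[0,1]$ for the games under study; in intermediate constructions arbitrary real entries are allowed) and the feedback matrix $\mathbf{H}=(h_{ij})$. Write $\underline{n}=\{1,\dots,n\}$. Nature (an oblivious adversary) fixes an outcome sequence $J_1,J_2,\ldots\in\underline{M}$ in advance, hidden from Learner. At each time $t$, Learner chooses (possibly at random) an action $I_t\in\underline{N}$, as a function of his own internal randomization and the past feedbacks $h_{I_1,J_1},\dots,h_{I_{t-1},J_{t-1}}$; he then observes $h_{I_t,J_t}$ and suffers (without observing it) loss $\ell_{I_t,J_t}$. Such a rule is a strategy (algorithm) $\mathcal{A}$. The regret is $R_T(\mathcal{A},\mathbf{G})=\mathbb{E}\big[\sum_{t=1}^T\ell_{I_t,J_t}-\min_{i\in\underline{N}}\sum_{t=1}^T\ell_{i,J_t}\big]$, the minimax regret is $R_T^*(\mathbf{G})=\inf_{\mathcal{A}}\sup_{(J_1,\dots,J_T)\in\underline{M}^T}R_T(\mathcal{A},\mathbf{G})$.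 A game is trivial if either $R_T^*(\mathbf{G})=0$ for all $T$, or there is $c>0$ with $R_T^*(\mathbf{G})\ge cT$ for all $T$ (minimax regret is zero or grows linearly); otherwise non-trivial. A bandit game is a game with $\mathbf{H}=\mathbf{L}$. For two $N\times M$ games, $\mathbf{G}'\le\mathbf{G}$ (''$\mathbf{G}'$ is easier than $\mathbf{G}$'') means: for every algorithm $\mathcal{A}$ there is an algorithm $\mathcal{A}'$ such that, for every outcome sequence, $\mathcal{A}'$ played on $\mathbf{G}'$ chooses the same action sequence as $\mathcal{A}$ played on $\mathbf{G}$, and $R_T(\mathcal{A}',\mathbf{G}')\le R_T(\mathcal{A},\mathbf{G})$. *)

From Stdlib Require Import Reals List.
Import ListNotations.
Open Scope R_scope.

(* A matrix indexed by (action, outcome); only entries i < N, j < M matter. *)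
Definition matrix := nat -> nat -> R.

Fixpoint fsum (n : nat) (f : nat -> R) : R :=
  match n with O => 0 | S n' => fsum n' f + f n' end.

Fixpoint minupto (f : nat -> R) (n : nat) : R :=
  match n with O => f O | S n' => Rmin (minupto f n') (f n) end.

(* A (randomized) strategy of Learner, in behavioral form: given the history
   of its own past actions and the feedbacks received, a probability
   distribution over the next action. *)
Definition strategy := list (nat * R) -> nat -> R.

Definition valid_strategy (N : nat) (A : strategy) : Prop :=
  forall hist, (forall i, (i < N)%nat -> 0 <= A hist i) /\ fsum N (A hist) = 1.

(* Outcome sequences J_1, J_2, ... (indexed from 0) with values in {0..M-1}. *)
Definition valid_outcomes (M : nat) (J : nat -> nat) : Prop :=
  forall t, (J t < M)%nat.

Fixpoint exp_loss (N : nat) (L H : matrix) (A : strategy) (J : nat -> nat)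
    (hist : list (nat * R)) (t k : nat) : R :=
  match k with
  | O => 0
  | S k' => fsum N (fun i => A hist i *
             (L i (J t) + exp_loss N L H A J (hist ++ [(i, H i (J t))]) (S t) k'))
  end.

Fixpoint seqprob (H : matrix) (A : strategy) (J : nat -> nat)
    (hist : list (nat * R)) (t : nat) (a : list nat) : R :=
  match a with
  | [] => 1
  | i :: a' => A hist i * seqprob H A J (hist ++ [(i, H i (J t))]) (S t) a'
  end.

Definition regret (N : nat) (L H : matrix) (A : strategy) (J : nat -> nat) (T : nat) : R :=
  exp_loss N L H A J [] 0 T - minupto (fun i => fsum T (fun t => L i (J t))) (N - 1).

Definition is_sup (S : R -> Prop) (x : R) : Prop :=
  (forall y, S y -> y <= x) /\ (forall z, (forall y, S y -> y <= z) -> x <= z).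
Definition is_inf (S : R -> Prop) (x : R) : Prop :=
  (forall y, S y -> x <= y) /\ (forall z, (forall y, S y -> z <= y) -> z <= x).

Definition minimax_regret (N M : nat) (L H : matrix) (T : nat) (r : R) : Prop :=
  is_inf (fun x => exists A, valid_strategy N A /\
            is_sup (fun y => exists J, valid_outcomes M J /\ y = regret N L H A J T) x) r.

Definition trivial_game (N M : nat) (L H : matrix) : Prop :=
  (forall T, minimax_regret N M L H T 0) \/
  (exists c, 0 < c /\ forall T r, minimax_regret N M L H T r -> c * INR T <= r).

(* easier N M L' H' L H  :  G' = (L',H') <= G = (L,H) *)
Definition easier (N M : nat) (L' H' L H : matrix) : Prop :=
  forall A, valid_strategy N A ->
  exists A', valid_strategy N A' /\
    forall J, valid_outcomes M J ->
      (forall a, Forall (fun i => (i < N)%nat) a ->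
         seqprob H' A' J [] 0 a = seqprob H A J [] 0 a) /\
      (forall T, regret N L' H' A' J T <= regret N L H A J T).

(* Write d = L0 0 - L0 1 for the loss difference of the two actions.
   - If d has a constant sign, one action dominates and the minimax regret is 0.
   - Otherwise a strictly positive outcome distribution rho balances the two
     actions (E_rho d = 0).  By a finite-dimensional Fredholm alternative,
     either d is "locally observable", d j = phi0 (H0 0 j) - phi1 (H0 1 j), or
     some signed measure w is blind to every feedback function yet sees d.
   - In the blind case, rho +/- eps*w are two outcome distributions that
     Learner cannot tell apart but under which different actions are optimal;
     averaging the regret over i.i.d. outcomes gives linear regret.
   - In the observable case, translating feedback through phi0, phi1 turns any
     algorithm for the bandit game with losses phi_i (H0 i j) into one for G0
     with the same regret (the game is easier than a bandit game).  Exp3 on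
     these reconstructed losses gives regret O(sqrt T), while averaging over
     i.i.d. rho-outcomes, the regret is half the expected |sum of d|, which a
     fourth-moment bound shows is Omega(sqrt T). *)

From Stdlib Require Import Reals List Lra Lia Psatz Classical.
Import ListNotations.
Open Scope R_scope.

Lemma fsum_ext n f g : (forall i, (i < n)%nat -> f i = g i) -> fsum n f = fsum n g.
Proof.
  induction n as [|n IH]; intros Hfg; simpl; auto.
  rewrite IH by (intros; apply Hfg; lia). rewrite Hfg by lia. reflexivity.
Qed.

Lemma fsum_plus n f g : fsum n (fun i => f i + g i) = fsum n f + fsum n g.
Proof. induction n; simpl; [lra|]. rewrite IHn. lra. Qed.

Lemma fsum_scal n c f : fsum n (fun i => c * f i) = c * fsum n f.
Proof. induction n; simpl; [lra|]. rewrite IHn. lra. Qed.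

Lemma fsum_minus n f g : fsum n (fun i => f i - g i) = fsum n f - fsum n g.
Proof. induction n; simpl; [lra|]. rewrite IHn. lra. Qed.

Lemma fsum_zero n : fsum n (fun _ => 0) = 0.
Proof. induction n; simpl; lra. Qed.

Lemma fsum_const n c : fsum n (fun _ => c) = INR n * c.
Proof. induction n; simpl fsum; [simpl; lra|]. rewrite IHn, S_INR. lra. Qed.

Lemma fsum_le n f g : (forall i, (i < n)%nat -> f i <= g i) -> fsum n f <= fsum n g.
Proof.
  induction n as [|n IH]; intros Hfg; simpl; [lra|].
  pose proof (Hfg n ltac:(lia)). pose proof (IH ltac:(intros; apply Hfg; lia)). lra.
Qed.

Lemma fsum_nonneg n f : (forall i, (i < n)%nat -> 0 <= f i) -> 0 <= fsum n f.
Proof. intros Hf. rewrite <- (fsum_zero n). now apply fsum_le. Qed.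

Lemma fsum_term_le n f j : (j < n)%nat -> (forall i, (i < n)%nat -> 0 <= f i) -> f j <= fsum n f.
Proof.
  induction n as [|n IH]; intros Hj Hf; [lia|]. simpl.
  pose proof (fsum_nonneg n f ltac:(intros; apply Hf; lia)).
  pose proof (Hf n ltac:(lia)).
  destruct (Nat.eq_dec j n) as [->|Hne]; [lra|].
  pose proof (IH ltac:(lia) ltac:(intros; apply Hf; lia)). lra.
Qed.

Lemma fsum_pos n f j : (j < n)%nat -> (forall i, (i < n)%nat -> 0 <= f i) -> 0 < f j -> 0 < fsum n f.
Proof. intros Hj Hf Hfj. pose proof (fsum_term_le n f j Hj Hf). lra. Qed.

Lemma fsum_swap n m f :
  fsum n (fun i => fsum m (fun j => f i j)) = fsum m (fun j => fsum n (fun i => f i j)).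
Proof. induction n; simpl. - now rewrite fsum_zero. - rewrite IHn, <- fsum_plus. auto. Qed.

Lemma fsum_shift n f : fsum (S n) f = f 0%nat + fsum n (fun i => f (S i)).
Proof. induction n; simpl in *; [lra|]. rewrite IHn. lra. Qed.

Lemma fsum_window_S k t (f : nat -> R) :
  fsum (S k) (fun s => f (t + s)%nat) = f t + fsum k (fun s => f (S t + s)%nat).
Proof.
  rewrite fsum_shift, Nat.add_0_r. f_equal. apply fsum_ext; intros; f_equal; lia.
Qed.

Lemma fsum_split a b f : fsum (a + b) f = fsum a f + fsum b (fun k => f (a + k)%nat).
Proof.
  induction b; simpl.
  - rewrite Nat.add_0_r. lra.
  - rewrite Nat.add_succ_r. simpl. rewrite IHb. lra.
Qed.

Lemma fsum_two f : fsum 2 f = f 0%nat + f 1%nat.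
Proof. simpl. lra. Qed.

Lemma fsum_indicator n j1 c : (j1 < n)%nat -> fsum n (fun j => if Nat.eqb j j1 then c else 0) = c.
Proof.
  induction n as [|n IH]; intros Hj; [lia|]. simpl.
  destruct (Nat.eqb_spec n j1) as [->|Hne].
  - rewrite (fsum_ext _ _ (fun _ => 0)), fsum_zero; [lra|].
    intros i Hi. destruct (Nat.eqb_spec i j1); [lia|auto].
  - rewrite IH by lia. lra.
Qed.

Lemma exp_loss_S N L H A J hist t k :
  exp_loss N L H A J hist t (S k) =
  fsum N (fun i => A hist i * (L i (J t) + exp_loss N L H A J (hist ++ [(i, H i (J t))]) (S t) k)).
Proof. reflexivity. Qed.

Lemma exp_loss_outcome_shift N M L L' g H A J :
  valid_strategy N A -> valid_outcomes M J ->
  (forall i j, (i < N)%nat -> (j < M)%nat -> L i j = L' i j + g j) ->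
  forall k hist t, exp_loss N L H A J hist t k =
    exp_loss N L' H A J hist t k + fsum k (fun s => g (J (t + s)%nat)).
Proof.
  intros HA HJ HL k. induction k as [|k IH]; intros hist t; [simpl; lra|].
  rewrite !exp_loss_S, (fsum_window_S k t (fun x => g (J x))).
  set (c := g (J t) + fsum k (fun s => g (J (S t + s)%nat))).
  rewrite (fsum_ext N _ (fun i => A hist i * (L' i (J t) +
      exp_loss N L' H A J (hist ++ [(i, H i (J t))]) (S t) k) + c * A hist i)).
  2:{ intros i Hi. rewrite HL, IH by auto. unfold c. ring. }
  rewrite fsum_plus, fsum_scal. destruct (HA hist) as [_ ->]. unfold c. ring.
Qed.

Lemma exp_loss_scal N L H A J a :
  forall k hist t, exp_loss N (fun i j => a * L i j) H A J hist t k = a * exp_loss N L H A J hist t k.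
Proof.
  induction k as [|k IH]; intros; simpl exp_loss; [lra|].
  rewrite <- fsum_scal. apply fsum_ext. intros. rewrite IH. ring.
Qed.

Lemma exp_loss_mono N M L L' H A J :
  valid_strategy N A -> valid_outcomes M J ->
  (forall i j, (i < N)%nat -> (j < M)%nat -> L i j <= L' i j) ->
  forall k hist t, exp_loss N L H A J hist t k <= exp_loss N L' H A J hist t k.
Proof.
  intros HA HJ HL. induction k as [|k IH]; intros; simpl exp_loss; [lra|].
  apply fsum_le. intros i Hi. destruct (HA hist) as [Hp _].
  apply Rmult_le_compat_l; [now apply Hp|].
  specialize (HL i (J t) Hi (HJ t)). specialize (IH (hist ++ [(i, H i (J t))]) (S t)). lra.
Qed.

Lemma exp_loss_local N L H A J1 J2 k : forall hist t,
  (forall s, (t <= s)%nat -> J1 s = J2 s) ->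
  exp_loss N L H A J1 hist t k = exp_loss N L H A J2 hist t k.
Proof.
  induction k as [|k IH]; intros hist t HJ; simpl; auto. apply fsum_ext; intros.
  rewrite (HJ t), IH by (auto || intros; apply HJ; lia). reflexivity.
Qed.

Lemma exp_loss_zero N H A J : forall k hist t, exp_loss N (fun _ _ => 0) H A J hist t k = 0.
Proof.
  induction k as [|k IH]; intros; simpl; auto.
  rewrite (fsum_ext N _ (fun _ => 0)); [apply fsum_zero|]. intros. rewrite IH. ring.
Qed.

Definition cum_loss (L : matrix) (i T : nat) (J : nat -> nat) : R := fsum T (fun t => L i (J t)).

Lemma regret_two L H A J T :
  regret 2 L H A J T = exp_loss 2 L H A J [] 0 T - Rmin (cum_loss L 0 T J) (cum_loss L 1 T J).
Proof. reflexivity. Qed.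

Lemma Rmin_plus a b c : Rmin (a + c) (b + c) = Rmin a b + c.
Proof. unfold Rmin. destruct (Rle_dec (a + c) (b + c)), (Rle_dec a b); lra. Qed.

Lemma regret_outcome_shift M L L' g H A J T :
  valid_strategy 2 A -> valid_outcomes M J ->
  (forall i j, (i < 2)%nat -> (j < M)%nat -> L i j = L' i j + g j) ->
  regret 2 L H A J T = regret 2 L' H A J T.
Proof.
  intros HA HJ HL. rewrite !regret_two.
  rewrite (exp_loss_outcome_shift 2 M L L' g H A J HA HJ HL T [] 0).
  assert (Hcum : forall i, (i < 2)%nat ->
    cum_loss L i T J = cum_loss L' i T J + fsum T (fun s => g (J (0 + s)%nat))).
  { intros i Hi. unfold cum_loss. rewrite <- fsum_plus. apply fsum_ext. intros. apply HL; auto. }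
  rewrite (Hcum 0%nat), (Hcum 1%nat), Rmin_plus by lia. ring.
Qed.

(** * Averages over i.i.d. outcomes *)

Definition distribution (M : nat) (rho : nat -> R) : Prop :=
  (forall j, (j < M)%nat -> 0 <= rho j) /\ fsum M rho = 1.

Definition set_outcome (J : nat -> nat) (t j : nat) : nat -> nat :=
  fun s => if Nat.eqb s t then j else J s.

(* iid_avg M rho k t F J is the expectation of F J' where J' agrees with J
   except that the outcomes at times t, ..., t+k-1 are drawn i.i.d. from rho. *)
Fixpoint iid_avg (M : nat) (rho : nat -> R) (k t : nat) (F : (nat -> nat) -> R)
    (J : nat -> nat) : R :=
  match k with
  | O => F J
  | S k' => fsum M (fun j => rho j * iid_avg M rho k' (S t) F (set_outcome J t j))
  end.

Lemma set_outcome_at J t j : set_outcome J t j t = j.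
Proof. unfold set_outcome. now rewrite Nat.eqb_refl. Qed.

Lemma set_outcome_ne J t j s : s <> t -> set_outcome J t j s = J s.
Proof. unfold set_outcome. intros. destruct (Nat.eqb_spec s t); auto; lia. Qed.

Lemma set_outcome_valid M J t j :
  valid_outcomes M J -> (j < M)%nat -> valid_outcomes M (set_outcome J t j).
Proof. intros HJ Hj s. unfold set_outcome. destruct (Nat.eqb s t); auto. Qed.

Lemma avg_ext M rho k : forall t F G J,
  (forall J', (forall s, (s < t)%nat -> J' s = J s) -> F J' = G J') ->
  iid_avg M rho k t F J = iid_avg M rho k t G J.
Proof.
  induction k as [|k IH]; intros t F G J HFG; simpl; [now apply HFG|].
  apply fsum_ext; intros. f_equal. apply IH. intros J' HJ'. apply HFG. intros s Hs.
  rewrite HJ' by lia. apply set_outcome_ne. lia.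
Qed.

Lemma avg_ext_valid M rho k : forall t F G J,
  (forall J', valid_outcomes M J' -> F J' = G J') -> valid_outcomes M J ->
  iid_avg M rho k t F J = iid_avg M rho k t G J.
Proof.
  induction k as [|k IH]; intros t F G J HFG HJ; simpl; auto.
  apply fsum_ext; intros. f_equal. apply IH; auto. now apply set_outcome_valid.
Qed.

Lemma avg_local M rho t0 F :
  (forall J1 J2, (forall s, (t0 <= s)%nat -> J1 s = J2 s) -> F J1 = F J2) ->
  forall k t J1 J2, (t0 <= t)%nat -> (forall s, (t0 <= s)%nat -> J1 s = J2 s) ->
  iid_avg M rho k t F J1 = iid_avg M rho k t F J2.
Proof.
  intros HF. induction k as [|k IH]; intros t J1 J2 Ht HJ; simpl; auto.
  apply fsum_ext; intros. f_equal. apply IH; [lia|]. intros s Hs. unfold set_outcome.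
  destruct (Nat.eqb s t); auto.
Qed.

Lemma avg_plus M rho k : forall t F G J,
  iid_avg M rho k t (fun J' => F J' + G J') J = iid_avg M rho k t F J + iid_avg M rho k t G J.
Proof.
  induction k as [|k IH]; intros; simpl; auto.
  rewrite <- fsum_plus. apply fsum_ext; intros. rewrite IH. ring.
Qed.

Lemma avg_scal M rho k : forall t c F J,
  iid_avg M rho k t (fun J' => c * F J') J = c * iid_avg M rho k t F J.
Proof.
  induction k as [|k IH]; intros; simpl; auto.
  rewrite <- fsum_scal. apply fsum_ext; intros. rewrite IH. ring.
Qed.

Lemma avg_minus M rho k t F G J :
  iid_avg M rho k t (fun J' => F J' - G J') J = iid_avg M rho k t F J - iid_avg M rho k t G J.
Proof.
  unfold Rminus. rewrite avg_plus. f_equal.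
  rewrite (avg_ext M rho k t (fun J' => - G J') (fun J' => (-1) * G J')) by (intros; ring).
  rewrite avg_scal. ring.
Qed.

Lemma avg_const M rho k : distribution M rho -> forall t c J, iid_avg M rho k t (fun _ => c) J = c.
Proof.
  intros [_ Hs]. induction k as [|k IH]; intros; simpl; auto.
  rewrite (fsum_ext M _ (fun j => c * rho j)) by (intros; rewrite IH; ring).
  rewrite fsum_scal, Hs. ring.
Qed.

Lemma avg_fsum M rho k n : forall t F J,
  iid_avg M rho k t (fun J' => fsum n (fun i => F i J')) J =
  fsum n (fun i => iid_avg M rho k t (F i) J).
Proof.
  induction n as [|n IH]; intros; simpl.
  - rewrite (avg_ext M rho k t _ (fun J' => 0 * 1)) by (intros; ring).
    rewrite (avg_scal M rho k t 0 (fun _ => 1)). ring.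
  - rewrite avg_plus, IH. reflexivity.
Qed.

Lemma avg_le M rho k : distribution M rho -> forall t F G J,
  (forall J', valid_outcomes M J' -> F J' <= G J') -> valid_outcomes M J ->
  iid_avg M rho k t F J <= iid_avg M rho k t G J.
Proof.
  intros [Hp _]. induction k as [|k IH]; intros t F G J HFG HJ; simpl; auto.
  apply fsum_le; intros. apply Rmult_le_compat_l; auto.
  apply IH; auto. now apply set_outcome_valid.
Qed.

(* The constant outcome sequence, used as the (irrelevant) base point of averages. *)
Definition J0 : nat -> nat := fun _ => 0%nat.

Lemma J0_valid M : (1 <= M)%nat -> valid_outcomes M J0.
Proof. intros HM t. unfold J0. lia. Qed.

Definition regret_set (M : nat) (L H : matrix) (A : strategy) (T : nat) : R -> Prop :=
  fun y => exists J, valid_outcomes M J /\ y = regret 2 L H A J T.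

Lemma sup_ge_avg M rho A L H T x : distribution M rho -> (1 <= M)%nat ->
  is_sup (regret_set M L H A T) x ->
  iid_avg M rho T 0 (fun J => regret 2 L H A J T) J0 <= x.
Proof.
  intros Hd HM [Hub _]. rewrite <- (avg_const M rho T Hd 0 x J0).
  apply avg_le; [exact Hd| |now apply J0_valid]. intros J HJ. apply Hub. now exists J.
Qed.

Lemma avg_exp_loss_step M rho N L H A k t hist J : distribution M rho ->
  iid_avg M rho (S k) t (fun J' => exp_loss N L H A J' hist t (S k)) J =
  fsum M (fun j => rho j * fsum N (fun i => A hist i * (L i j +
     iid_avg M rho k (S t) (fun J' => exp_loss N L H A J' (hist ++ [(i, H i j)]) (S t) k) J))).
Proof.
  intros Hd. simpl iid_avg. apply fsum_ext; intros j Hj. f_equal.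
  rewrite (avg_ext M rho k (S t) _ (fun J' => fsum N (fun i => A hist i * L i j +
     A hist i * exp_loss N L H A J' (hist ++ [(i, H i j)]) (S t) k))).
  2:{ intros J' HJ'. cbv beta. rewrite HJ', set_outcome_at by lia.
      apply fsum_ext; intros; ring. }
  rewrite (avg_fsum M rho k N (S t) (fun i J' => A hist i * L i j +
     A hist i * exp_loss N L H A J' (hist ++ [(i, H i j)]) (S t) k)).
  apply fsum_ext; intros i Hi.
  set (E := fun J' => exp_loss N L H A J' (hist ++ [(i, H i j)]) (S t) k).
  rewrite (avg_plus M rho k (S t) (fun _ => A hist i * L i j) (fun J' => A hist i * E J')).
  rewrite (avg_const M rho k Hd), (avg_scal M rho k (S t) (A hist i) E).
  rewrite (avg_local M rho (S t) E (fun J1 J2 HJ => exp_loss_local N L H A J1 J2 k _ _ HJ)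
             k (S t) (set_outcome J t j) J); [ring|lia|intros; apply set_outcome_ne; lia].
Qed.



Lemma fsum_swap_weighted M N (rho a : nat -> R) f :
  fsum M (fun j => rho j * fsum N (fun i => a i * f i j)) =
  fsum N (fun i => a i * fsum M (fun j => rho j * f i j)).
Proof.
  rewrite (fsum_ext M _ (fun j => fsum N (fun i => a i * (rho j * f i j)))).
  2:{ intros. rewrite <- fsum_scal. apply fsum_ext; intros; ring. }
  rewrite fsum_swap. apply fsum_ext; intros. now rewrite fsum_scal.
Qed.

Lemma fsum_distr_plus M (rho f g : nat -> R) :
  fsum M (fun j => rho j * (f j + g j)) = fsum M (fun j => rho j * f j) + fsum M (fun j => rho j * g j).
Proof. rewrite <- fsum_plus. apply fsum_ext; intros; ring. Qed.

Definition mean_loss (M : nat) (rho : nat -> R) (L : matrix) : matrix :=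
  fun i _ => fsum M (fun j => rho j * L i j).

Lemma avg_exp_loss_mean M rho N L H A : distribution M rho ->
  forall k hist t J,
  iid_avg M rho k t (fun J' => exp_loss N L H A J' hist t k) J =
  iid_avg M rho k t (fun J' => exp_loss N (mean_loss M rho L) H A J' hist t k) J.
Proof.
  intros Hd. induction k as [|k IH]; intros; [reflexivity|].
  rewrite !avg_exp_loss_step by exact Hd.
  rewrite !(fsum_swap_weighted M N rho (A hist)).
  apply fsum_ext; intros i Hi. f_equal. rewrite !fsum_distr_plus. f_equal.
  - unfold mean_loss. destruct Hd as [_ Hs]. symmetry.
    rewrite (fsum_ext M _ (fun j => fsum M (fun j0 => rho j0 * L i j0) * rho j)) by (intros; ring).
    rewrite fsum_scal, Hs. ring.
  - apply fsum_ext; intros. now rewrite IH.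
Qed.

Definition indistinguishable (N M : nat) (H : matrix) (P Q : nat -> R) : Prop :=
  forall i, (i < N)%nat -> forall g : R -> R,
    fsum M (fun j => P j * g (H i j)) = fsum M (fun j => Q j * g (H i j)).

Lemma avg_indistinguishable M P Q N (c : nat -> R) H A :
  distribution M P -> distribution M Q -> indistinguishable N M H P Q ->
  forall k hist t J,
  iid_avg M P k t (fun J' => exp_loss N (fun i _ => c i) H A J' hist t k) J =
  iid_avg M Q k t (fun J' => exp_loss N (fun i _ => c i) H A J' hist t k) J.
Proof.
  intros HP HQ HPQ. induction k as [|k IH]; intros; [reflexivity|].
  rewrite (avg_exp_loss_step M P), (avg_exp_loss_step M Q) by assumption.
  rewrite (fsum_swap_weighted M N P (A hist)), (fsum_swap_weighted M N Q (A hist)).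
  apply fsum_ext; intros i Hi. f_equal.
  rewrite (HPQ i Hi (fun h => c i + iid_avg M P k (S t)
     (fun J' => exp_loss N (fun i _ => c i) H A J' (hist ++ [(i, h)]) (S t) k) J)).
  apply fsum_ext; intros. now rewrite IH.
Qed.

Definition window_sum (d : nat -> R) (k t : nat) (J : nat -> nat) : R :=
  fsum k (fun s => d (J (t + s)%nat)).

Definition moment (M : nat) (rho d : nat -> R) (n : nat) : R := fsum M (fun j => rho j * d j ^ n).

Lemma moment0 M rho d : fsum M rho = 1 -> moment M rho d 0 = 1.
Proof. intros Hs. unfold moment. rewrite <- Hs. apply fsum_ext. intros. simpl. ring. Qed.

Lemma avg_window_step M rho k t (P : R -> R) c d J :
  iid_avg M rho (S k) t (fun J' => P (c + window_sum d (S k) t J')) J =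
  fsum M (fun j => rho j * iid_avg M rho k (S t) (fun J' => P ((c + d j) + window_sum d k (S t) J')) J).
Proof.
  simpl iid_avg at 1. apply fsum_ext; intros j Hj. f_equal.
  rewrite (avg_ext M rho k (S t) _ (fun J' => P ((c + d j) + window_sum d k (S t) J'))).
  2:{ intros J' HJ'. unfold window_sum. rewrite (fsum_window_S k t (fun x => d (J' x))).
      rewrite HJ', set_outcome_at by lia. f_equal. ring. }
  apply (avg_local M rho (S t)); [ |lia|intros; apply set_outcome_ne; lia].
  intros J1 J2 HJ. f_equal. f_equal. unfold window_sum. apply fsum_ext; intros; f_equal; apply HJ; lia.
Qed.

Lemma expect_poly4 M rho d a0 a1 a2 a3 a4 :
  fsum M (fun j => rho j * (a0 + a1 * d j + a2 * d j ^ 2 + a3 * d j ^ 3 + a4 * d j ^ 4)) =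
  a0 * moment M rho d 0 + a1 * moment M rho d 1 + a2 * moment M rho d 2
  + a3 * moment M rho d 3 + a4 * moment M rho d 4.
Proof.
  unfold moment. rewrite <- !fsum_scal, <- !fsum_plus. apply fsum_ext; intros. simpl. ring.
Qed.

Lemma avg_window_sum M rho k d : distribution M rho -> forall t c J,
  iid_avg M rho k t (fun J' => c + window_sum d k t J') J = c + INR k * moment M rho d 1.
Proof.
  intros [_ Hs]. induction k as [|k IH]; intros; [simpl; unfold window_sum; simpl; ring|].
  rewrite (avg_window_step M rho k t (fun x => x)).
  rewrite (fsum_ext M _ (fun j => rho j * ((c + INR k * moment M rho d 1)
             + 1 * d j + 0 * d j ^ 2 + 0 * d j ^ 3 + 0 * d j ^ 4))) by (intros; rewrite IH; ring).
  rewrite expect_poly4, moment0, S_INR by exact Hs. ring.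
Qed.

Lemma avg_window_sum_sq M rho k d : distribution M rho -> moment M rho d 1 = 0 -> forall t c J,
  iid_avg M rho k t (fun J' => (c + window_sum d k t J') ^ 2) J = c ^ 2 + INR k * moment M rho d 2.
Proof.
  intros [_ Hs] H1. induction k as [|k IH]; intros; [simpl; unfold window_sum; simpl; ring|].
  rewrite (avg_window_step M rho k t (fun x => x ^ 2)).
  rewrite (fsum_ext M _ (fun j => rho j * ((c ^ 2 + INR k * moment M rho d 2)
             + (2 * c) * d j + 1 * d j ^ 2 + 0 * d j ^ 3 + 0 * d j ^ 4))) by (intros; rewrite IH; ring).
  rewrite expect_poly4, moment0, H1, S_INR by exact Hs. ring.
Qed.

Lemma avg_window_sum_pow4 M rho k d : distribution M rho -> moment M rho d 1 = 0 -> forall t c J,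
  iid_avg M rho k t (fun J' => (c + window_sum d k t J') ^ 4) J =
  c ^ 4 + 6 * c ^ 2 * INR k * moment M rho d 2 + 4 * c * INR k * moment M rho d 3
  + INR k * moment M rho d 4 + 3 * INR k * (INR k - 1) * moment M rho d 2 ^ 2.
Proof.
  intros [_ Hs] H1. induction k as [|k IH]; intros; [simpl; unfold window_sum; simpl; ring|].
  rewrite (avg_window_step M rho k t (fun x => x ^ 4)).
  set (m2 := moment M rho d 2). set (m3 := moment M rho d 3). set (m4 := moment M rho d 4).
  set (K := INR k).
  rewrite (fsum_ext M _ (fun j => rho j *
     ((c ^ 4 + 6 * c ^ 2 * K * m2 + 4 * c * K * m3 + K * m4 + 3 * K * (K - 1) * m2 ^ 2)
      + (4 * c ^ 3 + 12 * c * K * m2 + 4 * K * m3) * d j + (6 * c ^ 2 + 6 * K * m2) * d j ^ 2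
      + (4 * c) * d j ^ 3 + 1 * d j ^ 4))) by (intros; rewrite IH; unfold K, m2, m3, m4; ring).
  rewrite expect_poly4. fold m2 m3 m4. rewrite moment0, H1, S_INR by exact Hs. fold K. ring.
Qed.

Lemma avg_cum_loss M rho L i T J : distribution M rho ->
  iid_avg M rho T 0 (fun J' => cum_loss L i T J') J = INR T * moment M rho (L i) 1.
Proof.
  intros Hd. rewrite (avg_ext M rho T 0 _ (fun J' => 0 + window_sum (L i) T 0 J')).
  - rewrite avg_window_sum by exact Hd. ring.
  - intros. unfold cum_loss, window_sum. rewrite Rplus_0_l. reflexivity.
Qed.

(** * A Fredholm alternative and local observability *)

Definition dot (M : nat) (u v : nat -> R) : R := fsum M (fun j => u j * v j).

Definition in_span (M n : nat) (gen : nat -> nat -> R) (d : nat -> R) : Prop :=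
  exists c : nat -> R, forall j, (j < M)%nat -> d j = fsum n (fun k => c k * gen k j).

Lemma dot_sub_l M a b v beta : dot M (fun j => a j - beta * b j) v = dot M a v - beta * dot M b v.
Proof. unfold dot. rewrite <- fsum_scal, <- fsum_minus. apply fsum_ext; intros; ring. Qed.

Lemma dot_sub_r M u a b beta : dot M u (fun j => a j - beta * b j) = dot M u a - beta * dot M u b.
Proof. unfold dot. rewrite <- fsum_scal, <- fsum_minus. apply fsum_ext; intros; ring. Qed.

Lemma dot_span M n gen w c : (forall k, (k < n)%nat -> dot M w (gen k) = 0) ->
  dot M w (fun j => fsum n (fun k => c k * gen k j)) = 0.
Proof.
  intros Hw. unfold dot.
  rewrite (fsum_ext M _ (fun j => fsum n (fun k => c k * (w j * gen k j)))).
  2:{ intros. rewrite <- fsum_scal. apply fsum_ext; intros; ring. }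
  rewrite fsum_swap, (fsum_ext n _ (fun k => 0)); [apply fsum_zero|].
  intros k Hk. rewrite fsum_scal. unfold dot in Hw. rewrite Hw by exact Hk. ring.
Qed.

Lemma dot_self_pos M d : ~ (forall j, (j < M)%nat -> d j = 0) -> 0 < dot M d d.
Proof.
  intros Hnz. apply not_all_ex_not in Hnz as [j0 Hj0].
  apply imply_to_and in Hj0 as [Hj0 Hd0].
  apply (fsum_pos M _ j0 Hj0); [intros; nra|]. pose proof (Rsqr_pos_lt _ Hd0). unfold Rsqr in *. lra.
Qed.

Lemma fredholm_alternative M : forall n gen d, in_span M n gen d \/
  exists w, (forall k, (k < n)%nat -> dot M w (gen k) = 0) /\ dot M w d <> 0.
Proof.
  induction n as [|n IH]; intros gen d.
  - destruct (classic (forall j, (j < M)%nat -> d j = 0)) as [Hz|Hnz].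
    + left. exists (fun _ => 0). intros. simpl. auto.
    + right. exists d. split; [intros; lia|]. pose proof (dot_self_pos M d Hnz). lra.
  - destruct (IH gen (gen n)) as [[a Ha] | [u [Hu Hun]]].
    + destruct (IH gen d) as [[c Hc] | [w [Hw Hwd]]].
      * left. exists (fun k => if Nat.eqb k n then 0 else c k). intros j Hj. simpl.
        rewrite Nat.eqb_refl, Hc by exact Hj. rewrite Rmult_0_l, Rplus_0_r.
        apply fsum_ext; intros. destruct (Nat.eqb_spec i n); [lia|auto].
      * right. exists w. split; auto. intros k Hk. destruct (Nat.eq_dec k n) as [->|Hne].
        -- rewrite <- (dot_span M n gen w a Hw). unfold dot. apply fsum_ext. intros. rewrite Ha; auto.
        -- apply Hw. lia.
    + set (alpha := dot M u d / dot M u (gen n)).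
      destruct (IH gen (fun j => d j - alpha * gen n j)) as [[c Hc] | [w [Hw Hwd]]].
      * left. exists (fun k => if Nat.eqb k n then alpha else c k). intros j Hj. simpl.
        rewrite Nat.eqb_refl, (fsum_ext n _ (fun k => c k * gen k j)).
        -- rewrite <- Hc by exact Hj. ring.
        -- intros. destruct (Nat.eqb_spec i n); [lia|auto].
      * right. exists (fun j => w j - (dot M w (gen n) / dot M u (gen n)) * u j). split.
        -- intros k Hk. rewrite dot_sub_l. destruct (Nat.eq_dec k n) as [->|Hne].
           ++ field. exact Hun.
           ++ rewrite (Hw k ltac:(lia)), (Hu k ltac:(lia)). ring.
        -- rewrite dot_sub_l. rewrite dot_sub_r in Hwd. intro Hc. apply Hwd.
           rewrite <- Hc. unfold alpha. field. exact Hun.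
Qed.

Definition indR (a b : R) : R := if Req_EM_T a b then 1 else 0.

Lemma orthogonal_level_sets M (h w : nat -> R) :
  (forall k, (k < M)%nat -> fsum M (fun j => w j * indR (h j) (h k)) = 0) ->
  forall g : R -> R, fsum M (fun j => w j * g (h j)) = 0.
Proof.
  intros Hw g. set (count := fun s => fsum M (fun k => indR (h k) s)).
  assert (Hcount : forall j, (j < M)%nat -> 0 < count (h j)).
  { intros j Hj. apply (fsum_pos M _ j Hj).
    - intros. unfold indR. destruct (Req_EM_T _ _); lra.
    - unfold indR. destruct (Req_EM_T (h j) (h j)); [lra|congruence]. }
  rewrite (fsum_ext M _ (fun j => w j * fsum M (fun k => indR (h j) (h k) * (g (h k) / count (h k))))).
  2:{ intros j Hj. f_equal.
      rewrite (fsum_ext M _ (fun k => (g (h j) / count (h j)) * indR (h k) (h j))).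
      2:{ intros k Hk. unfold indR.
          destruct (Req_EM_T (h j) (h k)) as [E|E], (Req_EM_T (h k) (h j)); try congruence;
          [rewrite E|]; ring. }
      rewrite fsum_scal. fold (count (h j)). field. specialize (Hcount j Hj). lra. }
  rewrite (fsum_ext M _ (fun j => fsum M (fun k => (g (h k) / count (h k)) * (w j * indR (h j) (h k))))).
  2:{ intros. rewrite <- fsum_scal. apply fsum_ext; intros; ring. }
  rewrite fsum_swap, (fsum_ext M _ (fun k => 0)); [apply fsum_zero|].
  intros k Hk. rewrite fsum_scal, Hw by exact Hk. ring.
Qed.

Definition locally_observable (M : nat) (L H : matrix) (phi0 phi1 : R -> R) : Prop :=
  forall j, (j < M)%nat -> L 0%nat j - L 1%nat j = phi0 (H 0%nat j) - phi1 (H 1%nat j).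

Definition feedback_blind (M : nat) (H : matrix) (w : nat -> R) : Prop :=
  forall i, (i < 2)%nat -> forall g : R -> R, fsum M (fun j => w j * g (H i j)) = 0.

(* Either the game is locally observable, or some feedback-blind measure
   detects the loss difference.  The generators are the indicators of the
   level sets of the two feedback rows. *)
Lemma observability_alternative M (L H : matrix) :
  (exists phi0 phi1, locally_observable M L H phi0 phi1) \/
  (exists w, feedback_blind M H w /\ fsum M (fun j => w j * (L 0%nat j - L 1%nat j)) <> 0).
Proof.
  set (gen := fun k j => if Nat.ltb k M then indR (H 0%nat j) (H 0%nat k)
                         else indR (H 1%nat j) (H 1%nat (k - M)%nat)).
  assert (Hlow : forall k j, (k < M)%nat -> gen k j = indR (H 0%nat j) (H 0%nat k)).
  { intros k j Hk. unfold gen. destruct (Nat.ltb_spec k M); [auto|lia]. }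
  assert (Hhigh : forall k j, gen (M + k)%nat j = indR (H 1%nat j) (H 1%nat k)).
  { intros k j. unfold gen. destruct (Nat.ltb_spec (M + k) M); [lia|]. do 3 f_equal. lia. }
  destruct (fredholm_alternative M (M + M) gen (fun j => L 0%nat j - L 1%nat j))
    as [[c Hc] | [w [Hw Hwd]]].
  - left. exists (fun s => fsum M (fun k => c k * indR s (H 0%nat k))).
    exists (fun s => - fsum M (fun k => c (M + k)%nat * indR s (H 1%nat k))).
    intros j Hj. rewrite Hc, fsum_split by exact Hj.
    rewrite (fsum_ext M (fun k => c k * gen k j) (fun k => c k * indR (H 0%nat j) (H 0%nat k)))
      by (intros; rewrite Hlow; auto).
    rewrite (fsum_ext M (fun k => c (M + k)%nat * gen (M + k)%nat j)
               (fun k => c (M + k)%nat * indR (H 1%nat j) (H 1%nat k))) by (intros; rewrite Hhigh; auto).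
    ring.
  - right. exists w. split; [|exact Hwd]. intros i Hi g. apply orthogonal_level_sets.
    intros k Hk. destruct i as [|[|]]; try lia.
    + rewrite <- (Hw k ltac:(lia)). unfold dot. apply fsum_ext; intros. now rewrite Hlow.
    + rewrite <- (Hw (M + k)%nat ltac:(lia)). unfold dot. apply fsum_ext; intros. now rewrite Hhigh.
Qed.

(** * Reduction to a bandit game *)

Definition reconstructed_loss (psi0 psi1 : R -> R) (H : matrix) : matrix :=
  fun i j => if Nat.eqb i 0 then psi0 (H 0%nat j) else psi1 (H 1%nat j).

Section BanditReduction.

Variables (M : nat) (L0 H0 : matrix) (phi0 phi1 : R -> R).
Hypothesis Hobs : locally_observable M L0 H0 phi0 phi1.

Definition bandit_loss : matrix := reconstructed_loss phi0 phi1 H0.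

Definition translate (x : nat * R) : nat * R :=
  (fst x, if Nat.eqb (fst x) 0 then phi0 (snd x) else phi1 (snd x)).

Definition translated (A : strategy) : strategy := fun hist i => A (map translate hist) i.

Lemma translate_feedback i j : (i < 2)%nat -> translate (i, H0 i j) = (i, bandit_loss i j).
Proof. intros Hi. unfold translate, bandit_loss, reconstructed_loss. destruct i as [|[|]]; simpl; auto; lia. Qed.

Lemma seqprob_translated A J : forall a, Forall (fun i => (i < 2)%nat) a -> forall hist t,
  seqprob H0 (translated A) J hist t a = seqprob bandit_loss A J (map translate hist) t a.
Proof.
  induction a as [|i a IH]; intros Ha hist t; [reflexivity|].
  inversion Ha as [|? ? Hi Ha']; subst. simpl.
  rewrite IH, map_app by exact Ha'. simpl. now rewrite translate_feedback.
Qed.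

Lemma exp_loss_translated A J : forall k hist t,
  exp_loss 2 L0 H0 (translated A) J hist t k = exp_loss 2 L0 bandit_loss A J (map translate hist) t k.
Proof.
  induction k as [|k IH]; intros; [reflexivity|]. rewrite !exp_loss_S. apply fsum_ext; intros.
  rewrite IH, map_app. simpl. now rewrite translate_feedback.
Qed.

Lemma L0_bandit_shift : forall i j, (i < 2)%nat -> (j < M)%nat ->
  L0 i j = bandit_loss i j + (L0 0%nat j - phi0 (H0 0%nat j)).
Proof.
  intros i j Hi Hj. unfold bandit_loss, reconstructed_loss.
  destruct i as [|[|]]; simpl; try lia; [ring|]. pose proof (Hobs j Hj). lra.
Qed.

Lemma bandit_easier : easier 2 M L0 H0 bandit_loss bandit_loss.
Proof.
  intros A HA. exists (translated A). split.
  - intros hist. apply HA.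
  - intros J HJ. split.
    + intros a Ha. now apply seqprob_translated.
    + intros T. apply Req_le. unfold regret at 1. rewrite exp_loss_translated.
      exact (regret_outcome_shift M L0 bandit_loss _ bandit_loss A J T HA HJ L0_bandit_shift).
Qed.

End BanditReduction.

(** * Exp3 on reconstructed losses *)

Lemma ln_le_minus1 z : 0 < z -> ln z <= z - 1.
Proof.
  intros Hz. destruct (Rle_or_lt (ln z) (z - 1)) as [Hle|Hlt]; auto.
  apply exp_increasing in Hlt. rewrite exp_ln in Hlt by exact Hz.
  pose proof (exp_ineq1_le (z - 1)). lra.
Qed.

Lemma exp_neg_bound y : 0 <= y -> exp (- y) <= 1 - y + y ^ 2.
Proof.
  intros Hy. rewrite exp_Ropp.
  assert (Hsq : exp y = exp (y / 2) * exp (y / 2)) by (rewrite <- exp_plus; f_equal; field).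
  pose proof (exp_ineq1_le (y / 2)). pose proof (exp_pos (y / 2)).
  assert (Hq : (1 + y / 2) * (1 + y / 2) <= exp y) by (rewrite Hsq; nra).
  pose proof (exp_pos y).
  assert (1 <= (1 - y + y ^ 2) * ((1 + y / 2) * (1 + y / 2))) by nra.
  apply (Rmult_le_reg_r (exp y)); [lra|]. rewrite Rinv_l by lra. nra.
Qed.

(* The exponential-weights inequality for one action played with probability
   p and charged the importance-weighted loss l / p. *)
Lemma exp_weight_step p l eta : 0 < p <= 1 -> 0 <= l -> 0 < eta ->
  p * (l + / eta * ln (1 - p + p * exp (- (eta * l / p)))) <= eta * l ^ 2.
Proof.
  intros Hp Hl He. set (y := eta * l / p).
  assert (Hy : 0 <= y) by (unfold y; apply Rmult_le_pos; [nra|left; apply Rinv_0_lt_compat; lra]).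
  set (z := 1 - p + p * exp (- y)).
  pose proof (exp_neg_bound y Hy). pose proof (exp_pos (- y)).
  assert (Hz : 0 < z) by (unfold z; nra).
  assert (Hln : ln z <= - (eta * l) + eta ^ 2 * l ^ 2 / p).
  { pose proof (ln_le_minus1 z Hz).
    replace (- (eta * l) + eta ^ 2 * l ^ 2 / p) with (- p * y + p * y ^ 2) by (unfold y; field; lra).
    unfold z in *. nra. }
  assert (Hinv : 0 < / eta) by (apply Rinv_0_lt_compat; exact He).
  assert (/ eta * ln z <= - l + eta * l ^ 2 / p).
  { replace (- l + eta * l ^ 2 / p) with (/ eta * (- (eta * l) + eta ^ 2 * l ^ 2 / p)) by (field; lra).
    apply Rmult_le_compat_l; lra. }
  replace (eta * l ^ 2) with (p * (l + (- l + eta * l ^ 2 / p))) by (field; lra).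
  apply Rmult_le_compat_l; lra.
Qed.

Section Exp3.

Variable eta : R.
Variables psi0 psi1 : R -> R.

(* The state is the pair of importance-weighted cumulative loss estimates. *)
Definition weight_sum (s : R * R) : R := exp (- (eta * fst s)) + exp (- (eta * snd s)).
Definition prob0 (s : R * R) : R := exp (- (eta * fst s)) / weight_sum s.
Definition prob1 (s : R * R) : R := exp (- (eta * snd s)) / weight_sum s.

Definition exp3_update (s : R * R) (x : nat * R) : R * R :=
  if Nat.eqb (fst x) 0 then (fst s + psi0 (snd x) / prob0 s, snd s)
  else (fst s, snd s + psi1 (snd x) / prob1 s).

Definition exp3_state (hist : list (nat * R)) : R * R := fold_left exp3_update hist (0, 0).

Definition exp3 : strategy := fun hist i =>
  if Nat.eqb i 0 then prob0 (exp3_state hist)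
  else if Nat.eqb i 1 then prob1 (exp3_state hist) else 0.

(* The potential -(1/eta) ln (sum of weights), a soft minimum of the estimates. *)
Definition potential (s : R * R) : R := - (/ eta * ln (weight_sum s)).

Definition estimate (a : nat) (s : R * R) : R := if Nat.eqb a 0 then fst s else snd s.

Lemma weight_sum_pos s : 0 < weight_sum s.
Proof.
  unfold weight_sum. pose proof (exp_pos (- (eta * fst s))). pose proof (exp_pos (- (eta * snd s))). lra.
Qed.

Lemma prob_sum s : prob0 s + prob1 s = 1.
Proof. unfold prob0, prob1, weight_sum. pose proof (weight_sum_pos s). unfold weight_sum in *. field. lra. Qed.

Lemma prob0_pos s : 0 < prob0 s.
Proof. apply Rdiv_lt_0_compat; [apply exp_pos|apply weight_sum_pos]. Qed.

Lemma prob1_pos s : 0 < prob1 s.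
Proof. apply Rdiv_lt_0_compat; [apply exp_pos|apply weight_sum_pos]. Qed.

Lemma exp3_valid : valid_strategy 2 exp3.
Proof.
  intros hist. split.
  - intros i Hi. unfold exp3. destruct i as [|[|]]; simpl; try lia.
    + left; apply prob0_pos.
    + left; apply prob1_pos.
  - rewrite fsum_two. unfold exp3. simpl. apply prob_sum.
Qed.

Lemma exp3_state_snoc hist x : exp3_state (hist ++ [x]) = exp3_update (exp3_state hist) x.
Proof. unfold exp3_state. now rewrite fold_left_app. Qed.

Lemma weight_ratio0 s l :
  weight_sum (fst s + l / prob0 s, snd s) / weight_sum s = 1 - prob0 s + prob0 s * exp (- (eta * l / prob0 s)).
Proof.
  pose proof (weight_sum_pos s). pose proof (prob_sum s). pose proof (prob0_pos s).
  unfold weight_sum at 1. simpl.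
  replace (- (eta * (fst s + l / prob0 s))) with (- (eta * fst s) + - (eta * l / prob0 s)) by (field; lra).
  rewrite exp_plus. replace (1 - prob0 s) with (prob1 s) by lra. unfold prob0 at 2, prob1. field. lra.
Qed.

Lemma weight_ratio1 s l :
  weight_sum (fst s, snd s + l / prob1 s) / weight_sum s = 1 - prob1 s + prob1 s * exp (- (eta * l / prob1 s)).
Proof.
  pose proof (weight_sum_pos s). pose proof (prob_sum s). pose proof (prob1_pos s).
  unfold weight_sum at 1. simpl.
  replace (- (eta * (snd s + l / prob1 s))) with (- (eta * snd s) + - (eta * l / prob1 s)) by (field; lra).
  rewrite exp_plus. replace (1 - prob1 s) with (prob0 s) by lra. unfold prob1 at 2, prob0. field. lra.
Qed.

Lemma potential_diff s s' : potential s' - potential s = - (/ eta * ln (weight_sum s' / weight_sum s)).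
Proof.
  unfold potential, Rdiv.
  rewrite ln_mult, ln_Rinv by (apply weight_sum_pos || apply Rinv_0_lt_compat, weight_sum_pos). ring.
Qed.

Lemma potential_step s l0 l1 B : 0 < eta -> 0 <= l0 <= B -> 0 <= l1 <= B ->
  prob0 s * (l0 - (potential (fst s + l0 / prob0 s, snd s) - potential s)) +
  prob1 s * (l1 - (potential (fst s, snd s + l1 / prob1 s) - potential s)) <= 2 * eta * B ^ 2.
Proof.
  intros He H0 H1. rewrite !potential_diff, weight_ratio0, weight_ratio1.
  pose proof (prob_sum s). pose proof (prob0_pos s). pose proof (prob1_pos s).
  pose proof (exp_weight_step (prob0 s) l0 eta ltac:(lra) ltac:(lra) He).
  pose proof (exp_weight_step (prob1 s) l1 eta ltac:(lra) ltac:(lra) He).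
  assert (eta * l0 ^ 2 <= eta * B ^ 2) by (apply Rmult_le_compat_l; nra).
  assert (eta * l1 ^ 2 <= eta * B ^ 2) by (apply Rmult_le_compat_l; nra).
  lra.
Qed.

Lemma potential_le_estimate a s : 0 < eta -> potential s <= estimate a s.
Proof.
  intros He. unfold potential.
  assert (Hw : exp (- (eta * estimate a s)) <= weight_sum s).
  { unfold weight_sum, estimate. pose proof (exp_pos (- (eta * fst s))).
    pose proof (exp_pos (- (eta * snd s))). destruct (Nat.eqb a 0); lra. }
  assert (Hln : - (eta * estimate a s) <= ln (weight_sum s)).
  { rewrite <- (ln_exp (- (eta * estimate a s))). destruct Hw as [Hlt|Heq].
    - left. apply ln_increasing; [apply exp_pos|exact Hlt].
    - right. now rewrite Heq. }
  assert (Hinv : 0 < / eta) by (apply Rinv_0_lt_compat; exact He).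
  replace (estimate a s) with (- (/ eta * (- (eta * estimate a s)))) by (field; lra).
  apply Ropp_le_contravar, Rmult_le_compat_l; lra.
Qed.

Lemma estimate_update_mean a s l0 l1 : (a < 2)%nat ->
  prob0 s * estimate a (fst s + l0 / prob0 s, snd s) + prob1 s * estimate a (fst s, snd s + l1 / prob1 s)
  = estimate a s + (if Nat.eqb a 0 then l0 else l1).
Proof.
  intros Ha. pose proof (prob_sum s). pose proof (prob0_pos s). pose proof (prob1_pos s).
  unfold estimate. destruct a as [|[|]]; simpl; try lia.
  - replace (prob1 s) with (1 - prob0 s) by lra. field. lra.
  - replace (prob0 s) with (1 - prob1 s) by lra. field. lra.
Qed.

End Exp3.

Lemma exp3_potential_bound eta psi0 psi1 H J B a : 0 < eta -> (a < 2)%nat ->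
  (forall t, 0 <= psi0 (H 0%nat (J t)) <= B /\ 0 <= psi1 (H 1%nat (J t)) <= B) ->
  forall k hist t,
  exp_loss 2 (reconstructed_loss psi0 psi1 H) H (exp3 eta psi0 psi1) J hist t k
    + potential eta (exp3_state eta psi0 psi1 hist)
  <= estimate a (exp3_state eta psi0 psi1 hist)
     + fsum k (fun s => reconstructed_loss psi0 psi1 H a (J (t + s)%nat)) + INR k * (2 * eta * B ^ 2).
Proof.
  intros He Ha HB. induction k as [|k IH]; intros hist t.
  - simpl. pose proof (potential_le_estimate eta a (exp3_state eta psi0 psi1 hist) He). lra.
  - set (s := exp3_state eta psi0 psi1 hist).
    set (l0 := psi0 (H 0%nat (J t))). set (l1 := psi1 (H 1%nat (J t))).
    pose proof (IH (hist ++ [(0%nat, H 0%nat (J t))]) (S t)) as IH0.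
    pose proof (IH (hist ++ [(1%nat, H 1%nat (J t))]) (S t)) as IH1.
    rewrite exp3_state_snoc in IH0, IH1. fold s in IH0, IH1.
    unfold exp3_update in IH0, IH1. cbn [fst snd Nat.eqb] in IH0, IH1. fold l0 l1 in IH0, IH1.
    rewrite exp_loss_S, fsum_two, (fsum_window_S k t (fun x => reconstructed_loss psi0 psi1 H a (J x))), S_INR.
    unfold exp3 at 1 3. cbn [Nat.eqb]. fold s.
    replace (reconstructed_loss psi0 psi1 H 0%nat (J t)) with l0 by reflexivity.
    replace (reconstructed_loss psi0 psi1 H 1%nat (J t)) with l1 by reflexivity.
    replace (reconstructed_loss psi0 psi1 H a (J t)) with (if Nat.eqb a 0 then l0 else l1)
      by (unfold reconstructed_loss; now destruct (Nat.eqb a 0)).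
    destruct (HB t) as [Hl0 Hl1]. fold l0 l1 in Hl0, Hl1.
    pose proof (potential_step eta s l0 l1 B He Hl0 Hl1) as Hstep.
    pose proof (estimate_update_mean eta a s l0 l1 Ha) as Hmean.
    pose proof (prob0_pos eta s). pose proof (prob1_pos eta s).
    pose proof (prob_sum eta s).
    set (rest := fsum k (fun s0 => reconstructed_loss psi0 psi1 H a (J (S t + s0)%nat))) in *.
    apply (Rmult_le_compat_l (prob0 eta s)) in IH0; [|lra].
    apply (Rmult_le_compat_l (prob1 eta s)) in IH1; [|lra].
    nra.
Qed.

Section ObservableUpperBound.

Variables (M : nat) (L0 H0 : matrix) (phi0 phi1 : R -> R).
Hypothesis Hobs : locally_observable M L0 H0 phi0 phi1.

(* Shifting phi0, phi1 by a common constant makes the reconstructed losses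
   nonnegative and bounded by 2 * feedback_bound. *)
Definition feedback_bound : R := fsum M (fun j => Rabs (phi0 (H0 0%nat j)) + Rabs (phi1 (H0 1%nat j))).
Definition psi0 (h : R) : R := phi0 h + feedback_bound.
Definition psi1 (h : R) : R := phi1 h + feedback_bound.

Lemma feedback_bound_ge j : (j < M)%nat ->
  Rabs (phi0 (H0 0%nat j)) + Rabs (phi1 (H0 1%nat j)) <= feedback_bound.
Proof.
  intros Hj. apply (fsum_term_le M (fun j => Rabs (phi0 (H0 0%nat j)) + Rabs (phi1 (H0 1%nat j))) j Hj).
  intros. pose proof (Rabs_pos (phi0 (H0 0%nat i))). pose proof (Rabs_pos (phi1 (H0 1%nat i))). lra.
Qed.

Lemma psi_bounds J : valid_outcomes M J -> forall t,
  0 <= psi0 (H0 0%nat (J t)) <= 2 * feedback_bound /\ 0 <= psi1 (H0 1%nat (J t)) <= 2 * feedback_bound.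
Proof.
  intros HJ t. pose proof (feedback_bound_ge (J t) (HJ t)). unfold psi0, psi1.
  pose proof (Rabs_pos (phi0 (H0 0%nat (J t)))). pose proof (Rabs_pos (phi1 (H0 1%nat (J t)))).
  pose proof (Rle_abs (phi0 (H0 0%nat (J t)))). pose proof (Rle_abs (phi1 (H0 1%nat (J t)))).
  pose proof (Rle_abs (- phi0 (H0 0%nat (J t)))). pose proof (Rle_abs (- phi1 (H0 1%nat (J t)))).
  rewrite Rabs_Ropp in *. lra.
Qed.

Lemma L0_reconstructed_shift : forall i j, (i < 2)%nat -> (j < M)%nat ->
  L0 i j = reconstructed_loss psi0 psi1 H0 i j + (L0 0%nat j - psi0 (H0 0%nat j)).
Proof.
  intros i j Hi Hj. unfold reconstructed_loss, psi0, psi1.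
  destruct i as [|[|]]; simpl; try lia; [ring|]. pose proof (Hobs j Hj). lra.
Qed.

Lemma exp3_regret T J eta : 0 < eta -> valid_outcomes M J ->
  regret 2 L0 H0 (exp3 eta psi0 psi1) J T
  <= / eta * ln 2 + INR T * (2 * eta * (2 * feedback_bound) ^ 2).
Proof.
  intros He HJ.
  rewrite (regret_outcome_shift M L0 _ _ H0 _ J T (exp3_valid eta psi0 psi1) HJ L0_reconstructed_shift).
  assert (Hpot0 : potential eta (exp3_state eta psi0 psi1 []) = - (/ eta * ln 2)).
  { unfold potential, weight_sum. simpl. rewrite Rmult_0_r, Ropp_0, exp_0. do 3 f_equal. }
  pose proof (exp3_potential_bound eta psi0 psi1 H0 J _ 0 He ltac:(lia) (psi_bounds J HJ) T [] 0) as B0.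
  pose proof (exp3_potential_bound eta psi0 psi1 H0 J _ 1 He ltac:(lia) (psi_bounds J HJ) T [] 0) as B1.
  rewrite Hpot0 in B0, B1. unfold estimate in B0, B1. simpl in B0, B1.
  rewrite regret_two. unfold cum_loss, Rmin. destruct (Rle_dec _ _); lra.
Qed.

(* With eta = 1 / sqrt T, Exp3 has regret O(sqrt T). *)
Lemma exp3_sqrt_regret : exists C, 0 <= C /\ forall T, (1 <= T)%nat ->
  exists A, valid_strategy 2 A /\
    forall J, valid_outcomes M J -> regret 2 L0 H0 A J T <= C * sqrt (INR T).
Proof.
  set (B := 2 * feedback_bound). exists (ln 2 + 2 * B ^ 2). split.
  { pose proof ln_lt_2. pose proof (pow2_ge_0 B). lra. }
  intros T HT.
  assert (HTr : 1 <= INR T) by (apply (le_INR 1) in HT; exact HT).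
  set (s := sqrt (INR T)).
  assert (Hs : 0 < s) by (apply sqrt_lt_R0; lra).
  assert (HsT : s * s = INR T) by (apply sqrt_sqrt; lra).
  assert (Heta : 0 < / s) by (apply Rinv_0_lt_compat; exact Hs).
  exists (exp3 (/ s) psi0 psi1). split; [apply exp3_valid|].
  intros J HJ. eapply Rle_trans; [exact (exp3_regret T J (/ s) Heta HJ)|].
  fold B. rewrite Rinv_inv, <- HsT. apply Req_le. field. lra.
Qed.


End ObservableUpperBound.

(** * Games with a dominated action *)

Definition always (a : nat) : strategy := fun _ i => if Nat.eqb i a then 1 else 0.

Lemma always_valid a : (a < 2)%nat -> valid_strategy 2 (always a).
Proof.
  intros Ha hist. split.
  - intros. unfold always. destruct (Nat.eqb i a); lra.
  - rewrite fsum_two. unfold always. destruct a as [|[|]]; simpl; try lia; ring.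
Qed.

Lemma exp_loss_always L H J a : (a < 2)%nat -> forall k hist t,
  exp_loss 2 L H (always a) J hist t k = fsum k (fun s => L a (J (t + s)%nat)).
Proof.
  intros Ha. induction k as [|k IH]; intros; [reflexivity|].
  rewrite exp_loss_S, fsum_two, !IH, (fsum_window_S k t (fun x => L a (J x))).
  unfold always. destruct a as [|[|]]; simpl; try lia; ring.
Qed.

Section Dominated.

Variables (M : nat) (L H : matrix) (a : nat).
Hypothesis Ha : (a < 2)%nat.
Hypothesis Hdom : forall j, (j < M)%nat -> L a j <= L (1 - a)%nat j.

Lemma dominated_best_action J T : valid_outcomes M J ->
  Rmin (cum_loss L 0 T J) (cum_loss L 1 T J) = cum_loss L a T J.
Proof.
  intros HJ. assert (Hle : cum_loss L a T J <= cum_loss L (1 - a)%nat T J)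
    by (apply fsum_le; intros; apply Hdom, HJ).
  unfold Rmin. destruct a as [|[|]]; try lia; simpl in Hle; destruct (Rle_dec _ _); lra.
Qed.

Lemma dominated_regret_nonneg A J T : valid_strategy 2 A -> valid_outcomes M J ->
  0 <= regret 2 L H A J T.
Proof.
  intros HA HJ. rewrite regret_two, dominated_best_action by exact HJ.
  assert (Hlow : exp_loss 2 (fun _ j => L a j) H A J [] 0 T <= exp_loss 2 L H A J [] 0 T).
  { apply (exp_loss_mono 2 M); auto. intros i j Hi Hj.
    destruct (Nat.eq_dec i a) as [->|Hne]; [lra|]. replace i with (1 - a)%nat by lia. auto. }
  rewrite (exp_loss_outcome_shift 2 M _ (fun _ _ => 0) (fun j => L a j) H A J HA HJ) in Hlow
    by (intros; ring).
  rewrite exp_loss_zero in Hlow. unfold cum_loss. simpl in Hlow. lra.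
Qed.

Lemma always_dominant_regret J T : valid_outcomes M J -> regret 2 L H (always a) J T = 0.
Proof.
  intros HJ. rewrite regret_two, dominated_best_action, exp_loss_always by assumption.
  unfold cum_loss. simpl. ring.
Qed.

Lemma dominated_minimax_zero : (1 <= M)%nat -> forall T, minimax_regret 2 M L H T 0.
Proof.
  intros HM T. pose proof (J0_valid M HM) as HJ0. split.
  - intros y [A [HA [Hub _]]]. apply (Rle_trans _ (regret 2 L H A J0 T)).
    + now apply dominated_regret_nonneg.
    + apply Hub. now exists J0.
  - intros z Hz. apply Hz. exists (always a). split; [now apply always_valid|]. split.
    + intros y [J [HJ ->]]. rewrite always_dominant_regret by exact HJ. lra.
    + intros b Hb. rewrite <- (always_dominant_regret J0 T HJ0). apply Hb. now exists J0.
Qed.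

End Dominated.

(* When d takes a value of sign opposite to its total at j1, putting extra
   mass on j1 over the uniform distribution yields a distribution with full
   support under which d has mean zero. *)
Lemma balancing_distribution M d j1 : (j1 < M)%nat -> d j1 <> 0 -> d j1 * fsum M d <= 0 ->
  exists rho r, 0 < r /\ (forall j, (j < M)%nat -> r <= rho j) /\ fsum M rho = 1 /\
     moment M rho d 1 = 0.
Proof.
  intros Hj Hd Hs. set (s := fsum M d) in *.
  set (extra := - s / d j1).
  assert (Hextra : 0 <= extra).
  { unfold extra. replace (- s / d j1) with (- (d j1 * s) / (d j1 * d j1)) by (field; exact Hd).
    apply Rmult_le_pos; [lra|]. left. apply Rinv_0_lt_compat.
    pose proof (Rsqr_pos_lt _ Hd). unfold Rsqr in *. lra. }
  set (Z := INR M + extra).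
  assert (HM : 1 <= INR M) by (apply (le_INR 1); lia).
  assert (HZ : 0 < Z) by (unfold Z; lra).
  exists (fun j => (1 + (if Nat.eqb j j1 then extra else 0)) / Z), (/ Z).
  split; [now apply Rinv_0_lt_compat|]. split; [|split].
  - intros j _. unfold Rdiv. rewrite <- (Rmult_1_l (/ Z)) at 1. apply Rmult_le_compat_r.
    + left; now apply Rinv_0_lt_compat.
    + destruct (Nat.eqb j j1); lra.
  - rewrite (fsum_ext M _ (fun j => / Z * (1 + (if Nat.eqb j j1 then extra else 0)))) by (intros; unfold Rdiv; ring).
    rewrite fsum_scal, fsum_plus, fsum_const, fsum_indicator by exact Hj. unfold Z. field. lra.
  - unfold moment.
    rewrite (fsum_ext M _ (fun j => / Z * (d j + (if Nat.eqb j j1 then extra * d j1 else 0)))).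
    2:{ intros i _. destruct (Nat.eqb_spec i j1) as [->|]; field; lra. }
    rewrite fsum_scal, fsum_plus, fsum_indicator by exact Hj. fold s. unfold extra. field. split; lra.
Qed.

Lemma full_support_distribution M rho r : 0 < r -> (forall j, (j < M)%nat -> r <= rho j) ->
  fsum M rho = 1 -> distribution M rho.
Proof. intros Hr Hlow Hs. split; [intros j Hj; specialize (Hlow j Hj); lra|exact Hs]. Qed.

(* In a non-trivial game neither action dominates, so some full-support
   distribution makes the two actions equally good on average, while the
   loss difference has positive variance. *)
Lemma nontrivial_balanced M L H : (1 <= M)%nat -> ~ trivial_game 2 M L H ->
  exists rho r, 0 < r /\ (forall j, (j < M)%nat -> r <= rho j) /\ fsum M rho = 1 /\
    moment M rho (fun j => L 0%nat j - L 1%nat j) 1 = 0 /\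
    0 < moment M rho (fun j => L 0%nat j - L 1%nat j) 2.
Proof.
  intros HM Hnt. set (d := fun j => L 0%nat j - L 1%nat j).
  assert (Hsign : forall a, (a < 2)%nat -> exists j, (j < M)%nat /\ L (1 - a)%nat j < L a j).
  { intros a Ha. apply NNPP. intro Hno. apply Hnt. left. apply (dominated_minimax_zero M L H a Ha); [|exact HM].
    intros j Hj. apply Rnot_lt_le. intro Hlt. apply Hno. now exists j. }
  destruct (Hsign 0%nat ltac:(lia)) as [jp [Hjp Hdp]]. destruct (Hsign 1%nat ltac:(lia)) as [jm [Hjm Hdm]].
  simpl in Hdp, Hdm.
  assert (Hbal : exists rho r, 0 < r /\ (forall j, (j < M)%nat -> r <= rho j) /\ fsum M rho = 1 /\
     moment M rho d 1 = 0).
  { destruct (Rle_dec 0 (fsum M d)).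
    - apply (balancing_distribution M d jm); unfold d in *; [exact Hjm|lra|nra].
    - apply (balancing_distribution M d jp); unfold d in *; [exact Hjp|lra|nra]. }
  destruct Hbal as [rho [r [Hr [Hlow [Hs Hm1]]]]].
  exists rho, r. repeat split; auto.
  apply (fsum_pos M _ jp Hjp).
  - intros j Hj. specialize (Hlow j Hj). apply Rmult_le_pos; [lra|apply pow2_ge_0].
  - specialize (Hlow jp Hjp). apply Rmult_lt_0_compat; [lra|]. apply pow_lt. unfold d. lra.
Qed.

(** * Linear regret when the loss difference is invisible to the feedback *)

Lemma moment1 M rho d : moment M rho d 1 = fsum M (fun j => rho j * d j).
Proof. unfold moment. apply fsum_ext; intros; ring. Qed.

(* Loss 1 for action 0 and 0 for action 1: its expected value counts the plays of action 0. *)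
Definition plays0 : matrix := fun i _ => if Nat.eqb i 0 then 1 else 0.

Lemma avg_exp_loss_plays M P L H A T : distribution M P -> valid_strategy 2 A -> (1 <= M)%nat ->
  iid_avg M P T 0 (fun J => exp_loss 2 L H A J [] 0 T) J0 =
  INR T * moment M P (L 1%nat) 1 + (moment M P (L 0%nat) 1 - moment M P (L 1%nat) 1)
    * iid_avg M P T 0 (fun J => exp_loss 2 plays0 H A J [] 0 T) J0.
Proof.
  intros Hd HA HM. set (mu := fun i => moment M P (L i) 1).
  rewrite (avg_exp_loss_mean M P 2 L H A Hd T [] 0 J0).
  rewrite (avg_ext_valid M P T 0 _
     (fun J => INR T * mu 1%nat + (mu 0%nat - mu 1%nat) * exp_loss 2 plays0 H A J [] 0 T)).
  - rewrite avg_plus, avg_const, avg_scal by exact Hd. reflexivity.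
  - intros J HJ.
    rewrite (exp_loss_outcome_shift 2 M (mean_loss M P L) (fun i j => (mu 0%nat - mu 1%nat) * plays0 i j)
               (fun _ => mu 1%nat) H A J HA HJ).
    + rewrite exp_loss_scal, fsum_const. ring.
    + intros i j Hi _. unfold mean_loss, plays0, mu. rewrite !moment1.
      destruct i as [|[|]]; try lia; simpl; ring.
  - now apply J0_valid.
Qed.

Lemma avg_regret_vs_action M P L H A T b : distribution M P -> (b < 2)%nat -> (1 <= M)%nat ->
  iid_avg M P T 0 (fun J => exp_loss 2 L H A J [] 0 T) J0 - INR T * moment M P (L b) 1
  <= iid_avg M P T 0 (fun J => regret 2 L H A J T) J0.
Proof.
  intros Hd Hb HM. rewrite <- (avg_cum_loss M P L b T J0 Hd), <- avg_minus.
  apply avg_le; [exact Hd| |now apply J0_valid]. intros J _. rewrite regret_two.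
  assert (Rmin (cum_loss L 0 T J) (cum_loss L 1 T J) <= cum_loss L b T J)
    by (destruct b as [|[|]]; try lia; [apply Rmin_l|apply Rmin_r]).
  lra.
Qed.

Lemma two_point_lower_bound M L H P Q e A T x : (1 <= M)%nat ->
  distribution M P -> distribution M Q -> indistinguishable 2 M H P Q ->
  moment M P (fun j => L 0%nat j - L 1%nat j) 1 = e ->
  moment M Q (fun j => L 0%nat j - L 1%nat j) 1 = - e ->
  valid_strategy 2 A -> is_sup (regret_set M L H A T) x -> e / 2 * INR T <= x.
Proof.
  intros HM HP HQ HPQ HgP HgQ HA Hsup.
  assert (Hgap : forall R, moment M R (fun j => L 0%nat j - L 1%nat j) 1
                           = moment M R (L 0%nat) 1 - moment M R (L 1%nat) 1).
  { intros R. rewrite !moment1, <- fsum_minus. apply fsum_ext; intros; ring. }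
  rewrite Hgap in HgP, HgQ.
  pose proof (avg_regret_vs_action M P L H A T 1 HP ltac:(lia) HM) as LP.
  pose proof (avg_regret_vs_action M Q L H A T 0 HQ ltac:(lia) HM) as LQ.
  rewrite (avg_exp_loss_plays M P L H A T HP HA HM) in LP.
  rewrite (avg_exp_loss_plays M Q L H A T HQ HA HM) in LQ.
  rewrite <- (avg_indistinguishable M P Q 2 (fun i => if Nat.eqb i 0 then 1 else 0) H A HP HQ HPQ) in LQ.
  change (fun i _ : nat => if i =? 0 then 1 else 0) with plays0 in LQ.
  pose proof (sup_ge_avg M P A L H T x HP HM Hsup).
  pose proof (sup_ge_avg M Q A L H T x HQ HM Hsup).
  set (n := iid_avg M P T 0 (fun J => exp_loss 2 plays0 H A J [] 0 T) J0) in *.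
  rewrite HgP in LP. rewrite HgQ in LQ.
  assert (e * n <= x) by lra.
  assert (e * (INR T - n) <= x) by nra.
  lra.
Qed.

Lemma blind_perturbation M H rho r w : 0 < r -> (forall j, (j < M)%nat -> r <= rho j) ->
  fsum M rho = 1 -> feedback_blind M H w ->
  exists eps, 0 < eps /\ distribution M (fun j => rho j + eps * w j) /\
    distribution M (fun j => rho j - eps * w j) /\
    indistinguishable 2 M H (fun j => rho j + eps * w j) (fun j => rho j - eps * w j).
Proof.
  intros Hr Hlow Hs Hw.
  set (S := fsum M (fun j => Rabs (w j))).
  assert (HS : 0 <= S) by (apply fsum_nonneg; intros; apply Rabs_pos).
  assert (HwS : forall j, (j < M)%nat -> Rabs (w j) <= S)
    by (intros; apply (fsum_term_le M (fun j => Rabs (w j))); auto; intros; apply Rabs_pos).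
  set (eps := r / (1 + S)).
  assert (Heps : 0 < eps) by (apply Rdiv_lt_0_compat; lra).
  assert (Hsmall : forall j, (j < M)%nat -> eps * Rabs (w j) < rho j).
  { intros j Hj. specialize (Hlow j Hj). specialize (HwS j Hj).
    assert (eps * Rabs (w j) <= eps * S) by (apply Rmult_le_compat_l; lra).
    assert (eps * S < r) by (unfold eps; apply (Rmult_lt_reg_r (1 + S)); [lra|]; field_simplify; lra).
    lra. }
  assert (Hw1 : fsum M w = 0).
  { rewrite <- (Hw 0%nat ltac:(lia) (fun _ => 1)). apply fsum_ext; intros; ring. }
  exists eps. split; [exact Heps|]. split; [|split].
  - split.
    + intros j Hj. specialize (Hsmall j Hj). pose proof (Rle_abs (- w j)). rewrite Rabs_Ropp in *. nra.
    + rewrite fsum_plus, fsum_scal, Hw1, Hs. ring.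
  - split.
    + intros j Hj. specialize (Hsmall j Hj). pose proof (Rle_abs (w j)). nra.
    + rewrite fsum_minus, fsum_scal, Hw1, Hs. ring.
  - intros i Hi g.
    rewrite (fsum_ext M _ (fun j => rho j * g (H i j) + eps * (w j * g (H i j)))) by (intros; ring).
    rewrite (fsum_ext M (fun j => (rho j - eps * w j) * g (H i j))
               (fun j => rho j * g (H i j) - eps * (w j * g (H i j)))) by (intros; ring).
    rewrite fsum_plus, fsum_minus, !fsum_scal, (Hw i Hi). ring.
Qed.

Lemma blind_linear_regret M L H rho r w : (1 <= M)%nat ->
  0 < r -> (forall j, (j < M)%nat -> r <= rho j) -> fsum M rho = 1 ->
  moment M rho (fun j => L 0%nat j - L 1%nat j) 1 = 0 ->
  feedback_blind M H w -> fsum M (fun j => w j * (L 0%nat j - L 1%nat j)) <> 0 ->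
  exists c, 0 < c /\ forall T v, minimax_regret 2 M L H T v -> c * INR T <= v.
Proof.
  intros HM Hr Hlow Hs Hm1 Hw HD.
  set (d := fun j => L 0%nat j - L 1%nat j) in *.
  assert (Hsigned : exists w', feedback_blind M H w' /\ 0 < fsum M (fun j => w' j * d j)).
  { destruct (Rlt_dec 0 (fsum M (fun j => w j * d j))) as [Hpos|Hneg]; [now exists w|].
    exists (fun j => - w j). split.
    - intros i Hi g. rewrite (fsum_ext M _ (fun j => (-1) * (w j * g (H i j)))) by (intros; ring).
      rewrite fsum_scal, (Hw i Hi). ring.
    - rewrite (fsum_ext M _ (fun j => (-1) * (w j * d j))) by (intros; ring). rewrite fsum_scal.
      apply Rnot_lt_le in Hneg. destruct Hneg as [Hlt|Heq]; [lra|contradiction]. }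
  destruct Hsigned as [w' [Hw' HD']].
  destruct (blind_perturbation M H rho r w' Hr Hlow Hs Hw') as [eps [Heps [HP [HQ HPQ]]]].
  set (e := eps * fsum M (fun j => w' j * d j)).
  rewrite moment1 in Hm1.
  assert (HgP : moment M (fun j => rho j + eps * w' j) d 1 = e).
  { rewrite moment1. unfold e.
    rewrite (fsum_ext M _ (fun j => rho j * d j + eps * (w' j * d j))) by (intros; ring).
    rewrite fsum_plus, fsum_scal, Hm1. ring. }
  assert (HgQ : moment M (fun j => rho j - eps * w' j) d 1 = - e).
  { rewrite moment1. unfold e.
    rewrite (fsum_ext M _ (fun j => rho j * d j - eps * (w' j * d j))) by (intros; ring).
    rewrite fsum_minus, fsum_scal, Hm1. ring. }
  exists (e / 2). split; [unfold e; apply Rdiv_lt_0_compat; nra|].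
  intros T v [_ Hinf]. apply Hinf. intros y [A [HA Hsup]].
  exact (two_point_lower_bound M L H _ _ e A T y HM HP HQ HPQ HgP HgQ HA Hsup).
Qed.


(** * The sqrt T lower bound *)

Lemma Rmin_abs a b : Rmin a b = (a + b) / 2 - Rabs (a - b) / 2.
Proof.
  unfold Rmin. destruct (Rle_dec a b).
  - rewrite Rabs_left1 by lra. field.
  - rewrite Rabs_right by lra. field.
Qed.

(* A polynomial minorant of |x|, tangent to it at x = a: it turns second and
   fourth moments into a lower bound on the first absolute moment. *)
Lemma abs_ge_quartic x a : 0 < a -> 3 * x ^ 2 / (2 * a) - x ^ 4 / (2 * a ^ 3) <= Rabs x.
Proof.
  intros Ha. set (y := Rabs x). assert (Hy : 0 <= y) by apply Rabs_pos.
  assert (Hx2 : x ^ 2 = y ^ 2)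
    by (unfold y; destruct (Rcase_abs x); [rewrite Rabs_left|rewrite Rabs_right]; auto; ring).
  assert (Hx4 : x ^ 4 = y ^ 4) by (replace (x ^ 4) with ((x ^ 2) ^ 2) by ring; rewrite Hx2; ring).
  rewrite Hx2, Hx4.
  assert (0 <= y * (y - a) ^ 2 * (y + 2 * a)) by (apply Rmult_le_pos; [apply Rmult_le_pos; [lra|apply pow2_ge_0]|lra]).
  assert (Ha3 : 0 < 2 * a ^ 3) by (apply Rmult_lt_0_compat; [lra|apply pow_lt; exact Ha]).
  apply (Rmult_le_reg_r (2 * a ^ 3) _ _ Ha3).
  replace ((3 * y ^ 2 / (2 * a) - y ^ 4 / (2 * a ^ 3)) * (2 * a ^ 3)) with (3 * a ^ 2 * y ^ 2 - y ^ 4)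
    by (field; lra).
  nra.
Qed.

(* The choice a = bt sqrt T in abs_ge_quartic, with the moments of a sum of T
   centred i.i.d. variables, gives a bound of order sqrt T. *)
Lemma quartic_bound_sqrt m2 m4 T : 0 < m2 -> 0 <= m4 -> 1 <= T ->
  let K := m4 + 3 * m2 ^ 2 in let bt := 1 + K / m2 in let a := bt * sqrt T in
  m2 / bt * sqrt T <= 3 * (T * m2) / (2 * a) - (T * m4 + 3 * T * (T - 1) * m2 ^ 2) / (2 * a ^ 3).
Proof.
  intros Hm2 Hm4 HT K bt a.
  assert (HK : 0 < K) by (unfold K; nra).
  assert (HKm : 0 <= K / m2) by (apply Rlt_le, Rdiv_lt_0_compat; lra).
  assert (Hbt : 1 <= bt) by (unfold bt; lra).
  assert (Hbb : K <= m2 * bt ^ 2).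
  { replace K with (m2 * (K / m2)) by (field; lra). apply Rmult_le_compat_l; [lra|]. unfold bt. nra. }
  set (s := sqrt T). assert (Hs : 0 < s) by (apply sqrt_lt_R0; lra).
  assert (HsT : s * s = T) by (apply sqrt_sqrt; lra).
  assert (Hquart : T * m4 + 3 * T * (T - 1) * m2 ^ 2 <= T ^ 2 * K).
  { unfold K. assert (0 <= (T * T - T) * m4) by (apply Rmult_le_pos; nra). nra. }
  assert (Ha : a = bt * s) by reflexivity.
  assert (Hbt3 : 0 < 2 * bt ^ 3) by (apply Rmult_lt_0_compat; [lra|apply pow_lt; lra]).
  assert (E1 : 3 * (T * m2) / (2 * a) = 3 * s * m2 / (2 * bt)) by (rewrite Ha, <- HsT; field; lra).
  assert (E2 : (T * m4 + 3 * T * (T - 1) * m2 ^ 2) / (2 * a ^ 3) <= s * K / (2 * bt ^ 3)).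
  { replace (s * K / (2 * bt ^ 3)) with (T ^ 2 * K / (2 * a ^ 3)) by (rewrite Ha, <- HsT; field; lra).
    apply Rmult_le_compat_r; [|exact Hquart].
    left. apply Rinv_0_lt_compat, Rmult_lt_0_compat; [lra|apply pow_lt; rewrite Ha; nra]. }
  assert (E3 : s * K / (2 * bt ^ 3) <= s * m2 / (2 * bt)).
  { replace (s * m2 / (2 * bt)) with (s * (m2 * bt ^ 2) / (2 * bt ^ 3)) by (field; lra).
    apply Rmult_le_compat_r; [left; apply Rinv_0_lt_compat; lra|]. apply Rmult_le_compat_l; lra. }
  replace (m2 / bt * s) with (3 * s * m2 / (2 * bt) - s * m2 / (2 * bt)) by (field; lra).
  lra.
Qed.

Lemma avg_regret_balanced M rho L H A T : distribution M rho -> valid_strategy 2 A -> (1 <= M)%nat ->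
  moment M rho (fun j => L 0%nat j - L 1%nat j) 1 = 0 ->
  iid_avg M rho T 0 (fun J => regret 2 L H A J T) J0 =
  / 2 * iid_avg M rho T 0 (fun J => Rabs (window_sum (fun j => L 0%nat j - L 1%nat j) T 0 J)) J0.
Proof.
  intros Hd HA HM Hm.
  assert (Hmu : moment M rho (L 0%nat) 1 = moment M rho (L 1%nat) 1).
  { apply Rminus_diag_uniq. rewrite !moment1, <- fsum_minus. rewrite moment1 in Hm.
    rewrite <- Hm. apply fsum_ext; intros; ring. }
  set (X := fun J => window_sum (fun j => L 0%nat j - L 1%nat j) T 0 J).
  rewrite (avg_ext M rho T 0 _ (fun J => exp_loss 2 L H A J [] 0 T
     - (/ 2 * cum_loss L 0 T J + / 2 * cum_loss L 1 T J) + / 2 * Rabs (X J))).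
  2:{ intros J _. rewrite regret_two, Rmin_abs. unfold X, cum_loss, window_sum.
      rewrite <- fsum_minus. simpl Nat.add. field. }
  rewrite avg_plus, avg_minus, avg_plus, !avg_scal, !avg_cum_loss by exact Hd.
  rewrite (avg_exp_loss_plays M rho L H A T Hd HA HM), Hmu. lra.
Qed.

Lemma balanced_sqrt_lower_bound M L H rho : distribution M rho -> (1 <= M)%nat ->
  moment M rho (fun j => L 0%nat j - L 1%nat j) 1 = 0 ->
  0 < moment M rho (fun j => L 0%nat j - L 1%nat j) 2 ->
  exists c, 0 < c /\ forall T, (1 <= T)%nat -> forall A x, valid_strategy 2 A ->
    is_sup (regret_set M L H A T) x -> c * sqrt (INR T) <= x.
Proof.
  intros Hd HM Hm1 Hm2.
  set (d := fun j => L 0%nat j - L 1%nat j) in *.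
  set (m2 := moment M rho d 2) in *. set (m4 := moment M rho d 4).
  assert (Hm4 : 0 <= m4).
  { apply fsum_nonneg. intros j Hj. destruct Hd as [Hp _].
    apply Rmult_le_pos; [now apply Hp|]. replace (d j ^ 4) with ((d j ^ 2) ^ 2) by ring. apply pow2_ge_0. }
  set (bt := 1 + (m4 + 3 * m2 ^ 2) / m2).
  assert (Hbt : 0 < bt) by (unfold bt; assert (0 < (m4 + 3 * m2 ^ 2) / m2) by (apply Rdiv_lt_0_compat; nra); lra).
  exists (m2 / (2 * bt)). split; [apply Rdiv_lt_0_compat; lra|].
  intros T HT A x HA Hsup.
  assert (HTr : 1 <= INR T) by (apply (le_INR 1) in HT; exact HT).
  pose proof (quartic_bound_sqrt m2 m4 (INR T) Hm2 Hm4 HTr) as Hnum. cbv zeta in Hnum. fold bt in Hnum.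
  set (a := bt * sqrt (INR T)) in Hnum.
  assert (Ha : 0 < a) by (apply Rmult_lt_0_compat; [exact Hbt|apply sqrt_lt_R0; lra]).
  pose proof (sup_ge_avg M rho A L H T x Hd HM Hsup) as Hx.
  rewrite (avg_regret_balanced M rho L H A T Hd HA HM Hm1) in Hx. fold d in Hx.
  assert (Habs : iid_avg M rho T 0 (fun J => 3 / (2 * a) * (0 + window_sum d T 0 J) ^ 2
                     + (- / (2 * a ^ 3)) * (0 + window_sum d T 0 J) ^ 4) J0
                 <= iid_avg M rho T 0 (fun J => Rabs (window_sum d T 0 J)) J0).
  { apply avg_le; [exact Hd| |now apply J0_valid]. intros J _. rewrite Rplus_0_l.
    eapply Rle_trans; [|exact (abs_ge_quartic (window_sum d T 0 J) a Ha)]. apply Req_le. field. lra. }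
  rewrite avg_plus, !avg_scal, (avg_window_sum_sq M rho T d Hd Hm1), (avg_window_sum_pow4 M rho T d Hd Hm1)
    in Habs.
  fold m2 m4 in Habs.
  assert (Hpoly : 3 / (2 * a) * (0 ^ 2 + INR T * m2) + - / (2 * a ^ 3) * (0 ^ 4 + 6 * 0 ^ 2 * INR T * m2
      + 4 * 0 * INR T * moment M rho d 3 + INR T * m4 + 3 * INR T * (INR T - 1) * m2 ^ 2)
     = 3 * (INR T * m2) / (2 * a) - (INR T * m4 + 3 * INR T * (INR T - 1) * m2 ^ 2) / (2 * a ^ 3))
    by (field; lra).
  rewrite Hpoly in Habs.
  replace (m2 / (2 * bt) * sqrt (INR T)) with (/ 2 * (m2 / bt * sqrt (INR T))) by (field; lra).
  eapply Rle_trans; [|exact Hx]. apply Rmult_le_compat_l; lra.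
Qed.


Lemma is_sup_exists (S : R -> Prop) b y :
  (forall z, S z -> z <= b) -> S y -> exists x, is_sup S x /\ x <= b.
Proof.
  intros Hb Hy. destruct (completeness S) as [x [Hub Hleast]]; [now exists b|now exists y|].
  exists x. split; [split; [exact Hub|exact Hleast]|now apply Hleast].
Qed.

Lemma is_inf_exists (S : R -> Prop) b y :
  (forall z, S z -> b <= z) -> S y -> exists x, is_inf S x /\ b <= x /\ x <= y.
Proof.
  intros Hb Hy. destruct (is_sup_exists (fun z => S (- z)) (- b) (- y)) as [x [[Hub Hleast] Hx]].
  - intros z Hz. specialize (Hb _ Hz). lra.
  - now rewrite Ropp_involutive.
  - exists (- x). repeat split.
    + intros z Hz. assert (- z <= x) by (apply Hub; now rewrite Ropp_involutive). lra.
    + intros z Hz. assert (x <= - z) by (apply Hleast; intros u Hu; specialize (Hz _ Hu); lra). lra.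
    + lra.
    + assert (- y <= x) by (apply Hub; now rewrite Ropp_involutive). lra.
Qed.

Lemma minimax_between M L H T lo hi A0 : valid_strategy 2 A0 -> (1 <= M)%nat ->
  (forall J, valid_outcomes M J -> regret 2 L H A0 J T <= hi) ->
  (forall A x, valid_strategy 2 A -> is_sup (regret_set M L H A T) x -> lo <= x) ->
  exists r, minimax_regret 2 M L H T r /\ lo <= r /\ r <= hi.
Proof.
  intros HA0 HM Hhi Hlo.
  destruct (is_sup_exists (regret_set M L H A0 T) hi (regret 2 L H A0 J0 T)) as [m [Hm Hmhi]].
  - intros z [J [HJ ->]]. now apply Hhi.
  - exists J0. split; [now apply J0_valid|reflexivity].
  - destruct (is_inf_exists (fun x => exists A, valid_strategy 2 A /\ is_sup (regret_set M L H A T) x) lo m)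
      as [r [Hr [Hlor Hrm]]].
    + intros z [A [HA Hz]]. exact (Hlo A z HA Hz).
    + now exists A0.
    + exists r. split; [exact Hr|lra].
Qed.

Theorem theorem3 (M : nat) (L0 H0 : matrix) :
  (1 <= M)%nat ->
  (forall i j, (i < 2)%nat -> (j < M)%nat -> 0 <= L0 i j <= 1) ->
  ~ trivial_game 2 M L0 H0 ->
  (exists L' : matrix, easier 2 M L0 H0 L' L') /\
  (exists c C, 0 < c /\ c <= C /\
     forall T : nat, (1 <= T)%nat ->
       exists r, minimax_regret 2 M L0 H0 T r /\
                 c * sqrt (INR T) <= r /\ r <= C * sqrt (INR T)).
Proof.
  intros HM _ Hnt.
  destruct (nontrivial_balanced M L0 H0 HM Hnt) as [rho [r [Hr [Hlow [Hs [Hm1 Hm2]]]]]].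
  destruct (observability_alternative M L0 H0) as [[phi0 [phi1 Hobs]] | [w [Hw HD]]].
  2:{ exfalso. apply Hnt. right. exact (blind_linear_regret M L0 H0 rho r w HM Hr Hlow Hs Hm1 Hw HD). }
  split; [exists (bandit_loss H0 phi0 phi1); exact (bandit_easier M L0 H0 phi0 phi1 Hobs)|].
  pose proof (full_support_distribution M rho r Hr Hlow Hs) as Hd.
  destruct (balanced_sqrt_lower_bound M L0 H0 rho Hd HM Hm1 Hm2) as [c [Hc Hlb]].
  destruct (exp3_sqrt_regret M L0 H0 phi0 phi1 Hobs) as [C [HC Hub]].
  exists c, (C + c). split; [exact Hc|split; [lra|]].
  intros T HT. destruct (Hub T HT) as [A [HA HAJ]].
  pose proof (sqrt_pos (INR T)) as Hsq.
  apply (minimax_between M L0 H0 T _ _ A HA HM).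
  - intros J HJ. specialize (HAJ J HJ). nra.
  - intros B x HB Hx. exact (Hlb T HT B x HB Hx).
Qed.
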